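(* Let $\mathcal{I}$ be any instance of vertex cover on $n$ vertices. Consider a partial branch-and-bound tree $\mathcal{TP}_S$ generated by strong-branching with the product score function and the worst-bound node selection rule with ties broken by selecting a node of largest depth. Let $N$ be a node of this tree that is not pruned, let $j\in I(\mathcal{I},N)$, and suppose that strong-branching decides to branch on $x_j$ at $N$. Then (1) $\mathcal{TP}_S^B(\mathcal{I})=\mathrm{OPT}(\mathcal{I})$; and (2) after branching on $x_j$, only $\mathcal{O}(n)$ further branchings are needed to find an integral optimal solution of $\mathcal{I}$.
   Context: Vertex cover IP for a graph $G=(V,E)$, $n=|V|$: minimize $\sum_{v} x_v$ subject to $x_u+x_v\ge 1$ ($uv\in E$), $x\in\{0,1\}^V$; LP relaxation uses $x\in[0,1]^V$; $\mathrm{OPT}(\mathcal{I})$ is the IP optimal value. Branch-and-bound: each node $N$ is the LP relaxation plus constraints $x_j=0$ or $x_j=1$ for variables fixed on the path from the root; branching on $x_j$ at $N$ creates children with $x_j=0$ and $x_j=1$ added. The LP solver returns some optimal solution of each node LP. A node is pruned if its LP is infeasible, or the returned solution is integral, or its LP value is strictly larger than the value of an integral solution already found. Worst-bound node selection: process an open node of smallest LP value. Strong branching with product score: at node $N$ with LP value $z$ and returned solution $\hat x$, for each $j$ with $\hat x_j$ fractional let $z^0_j,z^1_j$ be the optimal LP values of the children ($+\infty$ if infeasible), $\Delta^-_j=z^0_j-z$, $\Delta^+_j=z^1_j-z$, $\mathrm{score}_P(j)=\Delta^+_j\Delta^-_j$ with $0\cdot\infty=0$; branch on a maximizer. $I(\mathcal{I},N)$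 (the maximal set of integer variables at $N$) is the union, over all optimal solutions $x$ of the LP at node $N$, of the sets $\{j: x_j\in\{0,1\}\}$. A partial tree is a tree produced by this procedure before termination; its dual bound $\mathcal{TP}_S^B(\mathcal{I})$ is the minimum LP value over its unpruned (open) leaves. *)

From HB Require Import structures.
From mathcomp Require Import all_boot all_order all_algebra.
From mathcomp Require Import classical_sets reals constructive_ereal ereal.
Set Implicit Arguments. Unset Strict Implicit. Unset Printing Implicit Defensive.
Import Order.TTheory GRing.Theory Num.Theory.
Local Open Scope classical_set_scope.
Local Open Scope ring_scope.

Section VC.
Variables (R : realType) (n : nat) (E : rel 'I_n).

(* A branch-and-bound vc_node = the list of fixings (x_j = b) on the path from
   the root (most recent first); its depth is its size. *)
Definition vc_node := seq ('I_n * bool).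
Definition vc_point := 'I_n -> R.

Definition obj (x : vc_point) : R := \sum_(i < n) x i.

Definition feasible (p : vc_node) (x : vc_point) : Prop :=
  (forall i, 0 <= x i <= 1) /\
  (forall u v, E u v -> 1 <= x u + x v) /\
  (forall jb, jb \in p -> x jb.1 = (if jb.2 then 1 else 0)).

Definition integral (x : vc_point) : Prop := forall i, x i = 0 \/ x i = 1.

(* Optimal LP value at vc_node p (+oo if the LP is infeasible). *)
Definition lpval (p : vc_node) : \bar R :=
  ereal_inf [set (obj x)%:E | x in [set x | feasible p x]].

Definition lp_opt (p : vc_node) (x : vc_point) : Prop :=
  feasible p x /\ forall y, feasible p y -> obj x <= obj y.

Definition OPT : \bar R :=
  ereal_inf [set (obj x)%:E | x in [set x | feasible [::] x /\ integral x]].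

Definition in_I (N : vc_node) (j : 'I_n) : Prop :=
  exists x, lp_opt N x /\ (x j = 0 \/ x j = 1).

Definition fractional (x : vc_point) (j : 'I_n) : Prop := 0 < x j < 1.

(* Product score of strong branching (0 * +oo = 0 in \bar R). *)
Definition score (p : vc_node) (k : 'I_n) : \bar R :=
  ((lpval ((k, true) :: p) - lpval p) * (lpval ((k, false) :: p) - lpval p))%E.

Definition sb_choice (p : vc_node) (x : vc_point) (j : 'I_n) : Prop :=
  fractional x j /\ forall k, fractional x k -> (score p k <= score p j)%E.

Record bb_state := BBState {
  bb_open : seq vc_node;
  bb_inc : \bar R;
  bb_nbr : nat }.

Definition bb_init : bb_state := BBState [:: [::]] +oo%E 0.

Definition selectable (S : bb_state) (p : vc_node) : Prop :=
  p \in bb_open S /\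
  forall q, q \in bb_open S ->
    (lpval p <= lpval q)%E /\ (lpval q = lpval p -> (size q <= size p)%N).

Definition branch_at (S : bb_state) (N : vc_node) (x : vc_point) (j : 'I_n)
    (S' : bb_state) : Prop :=
  selectable S N /\ lp_opt N x /\ ~ integral x /\
  (lpval N <= bb_inc S)%E /\ sb_choice N x j /\
  S' = BBState (((j, false) :: N) :: ((j, true) :: N) :: rem N (bb_open S))
               (bb_inc S) (bb_nbr S).+1.

Inductive bb_step : bb_state -> bb_state -> Prop :=
| step_infeasible S p :
    selectable S p -> lpval p = +oo%E ->
    bb_step S (BBState (rem p (bb_open S)) (bb_inc S) (bb_nbr S))
| step_integral S p x :
    selectable S p -> lp_opt p x -> integral x ->
    bb_step S (BBState (rem p (bb_open S))
                       (Order.min (bb_inc S) (obj x)%:E) (bb_nbr S))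
| step_bound S p x :
    selectable S p -> lp_opt p x -> ~ integral x -> (bb_inc S < lpval p)%E ->
    bb_step S (BBState (rem p (bb_open S)) (bb_inc S) (bb_nbr S))
| step_branch S p x j S' :
    branch_at S p x j S' -> bb_step S S'.

Inductive bb_reach : bb_state -> bb_state -> Prop :=
| reach_refl S : bb_reach S S
| reach_step S1 S2 S3 : bb_step S1 S2 -> bb_reach S2 S3 -> bb_reach S1 S3.

Definition dual_bound (S : bb_state) : \bar R :=
  \big[Order.min/+oo%E]_(p <- bb_open S) lpval p.

End VC.

From HB Require Import structures.
From mathcomp Require Import all_boot all_order all_algebra.
From mathcomp Require Import classical_sets reals constructive_ereal ereal boolp.
From mathcomp Require Import lra zify.
Set Implicit Arguments. Unset Strict Implicit. Unset Printing Implicit Defensive.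
Import Order.TTheory GRing.Theory Num.Theory.
Local Open Scope ring_scope.

(* The LP relaxation of vertex cover has half-integral optimal solutions: moving
   the coordinates above 1/2 and those below 1/2 in opposite directions keeps every
   edge covered, so any feasible point rounds to a half-integral one of no larger
   cost.  If x_j is integral in some optimum at N, the child fixing it to that value
   has the same LP value, so the product score of j is 0; as j maximises the score
   and scores are nonnegative, every fractional variable has such a child, i.e. for
   every coordinate some half-integral optimum is integral there.  Patching these
   optima coordinatewise gives an integral optimum at N, so LP(N) >= OPT.  Conversely
   LP(N) <= OPT, because N was not pruned and either the incumbent is optimal or some
   open node contains an optimal cover; by the worst-bound rule LP(N) is the dual
   bound.
   Afterwards track an open node containing an optimal cover.  The worst-bound rule
   with the depth tie-break only branches on nodes of value OPT at least as deep as
   it, and such a branching either extends the tracked node by one fixing or has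
   positive score, so that neither child has value OPT.  A potential counting the
   branchings and the deep open nodes of value OPT bounds the number of branchings
   by 2n before the incumbent is optimal. *)

Section LPValue.
Variables (R : realType) (n : nat) (E : rel 'I_n).
Implicit Types (p : vc_node n) (x y : vc_point R n).
Local Notation feasible := (feasible E).
Local Notation lpval := (lpval R E).
Local Notation OPT := (OPT R E).

Lemma feasible_behead p jb y : feasible (jb :: p) y -> feasible p y.
Proof.
by case=> box [cov pfix]; do 2!split=> //; move=> kb kp; apply: pfix; rewrite inE kp orbT.
Qed.

Lemma feasible_root p y : feasible p y -> feasible [::] y.
Proof. by case=> box [cov _]. Qed.

Lemma feasible_cons p k (b : bool) y :
  feasible p y -> y k = (if b then 1 else 0) -> feasible ((k, b) :: p) y.
Proof.
case=> box [cov pfix] yk; do 2!split=> //.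
by move=> kb; rewrite inE => /predU1P[->|]; last exact: pfix.
Qed.

Lemma lpval_le_obj p y : feasible p y -> (lpval p <= (obj y)%:E)%E.
Proof. by move=> fy; apply: ereal_inf_lbound; exists y. Qed.

Lemma lpval_ge p a : (forall y, feasible p y -> (a <= (obj y)%:E)%E) -> (a <= lpval p)%E.
Proof. by move=> h; apply/ereal_infP => _ [y fy <-]; exact: h. Qed.

Lemma lpval_lp_opt p y : lp_opt E p y -> lpval p = (obj y)%:E.
Proof.
case=> fy ymin; apply/le_anti; rewrite lpval_le_obj //=.
by apply: lpval_ge => z /ymin; rewrite lee_fin.
Qed.

Lemma lpval_cons p jb : (lpval p <= lpval (jb :: p))%E.
Proof. by apply: lpval_ge => y /feasible_behead; exact: lpval_le_obj. Qed.

Lemma lpval_feasible p (z : R) : lpval p = z%:E -> exists y, feasible p y.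
Proof.
move=> pz; apply: contrapT => infeasible.
suff : lpval p = +oo%E by rewrite pz.
by apply/ereal_inf_pinfty => e [y fy _]; case: infeasible; exists y.
Qed.

Lemma OPT_le_obj p y : integral y -> feasible p y -> (OPT <= (obj y)%:E)%E.
Proof. by move=> iy /feasible_root fy; apply: ereal_inf_lbound; exists y. Qed.

Lemma fractional_notin_fixings p x k :
  feasible p x -> fractional x k -> k \notin map fst p.
Proof.
move=> [_ [_ pfix]] /andP[xk0 xk1]; apply/mapP => -[[k' b] kb /= kk'].
by move: (pfix _ kb); rewrite /= -kk'; case: b {kb} => xk; lra.
Qed.

End LPValue.

Section HalfShift.
Variable R : realType.
Implicit Types r t : R.

Definition halfint r : bool := [|| r == 0, r == 2^-1 | r == 1].
Definition upper_frac r : bool := 2^-1 < r < 1.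
Definition lower_frac r : bool := 0 < r < 2^-1.
Definition half_dir r : R := if upper_frac r then 1 else if lower_frac r then -1 else 0.

Lemma halfintP r : reflect (r = 0 \/ r = 2^-1 \/ r = 1) (halfint r).
Proof.
apply: (iffP or3P) => [[] /eqP|[|[]] ->]; try tauto.
- exact: Or31 (eqxx _).
- exact: Or32 (eqxx _).
- exact: Or33 (eqxx _).
Qed.

Variant half_dir_spec r : R -> Prop :=
| HalfDirUpper of upper_frac r : half_dir_spec r 1
| HalfDirLower of lower_frac r : half_dir_spec r (-1)
| HalfDirHalfint of halfint r : half_dir_spec r 0.

Lemma half_dirP r : 0 <= r <= 1 -> half_dir_spec r (half_dir r).
Proof.
rewrite /half_dir => /andP[r0 r1]; case: ifP => [|/negbT up]; first exact: HalfDirUpper.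
case: ifP => [|/negbT lo]; first exact: HalfDirLower.
apply/HalfDirHalfint/halfintP; move: up lo; rewrite /upper_frac /lower_frac.
have [rh|rh|->] := ltgtP r 2^-1; rewrite ?rh ?andbT ?andbF -?leNgt => // up lo.
- by left; apply/eqP; rewrite eq_le r0 lo.
- by right; right; apply/eqP; rewrite eq_le r1 up.
- by right; left.
Qed.

Lemma halfint_frac r : halfint r -> ~~ upper_frac r && ~~ lower_frac r.
Proof.
rewrite /upper_frac /lower_frac => /halfintP[|[]]->;
  by apply/andP; split; apply/negP => /andP[]; lra.
Qed.

Lemma half_dir_halfint r : halfint r -> half_dir r = 0.
Proof. by move/halfint_frac/andP => [/negbTE up /negbTE lo]; rewrite /half_dir up lo. Qed.

Definition stays_on_side t r : Prop :=
  (upper_frac r -> 2^-1 <= r + t <= 1) /\ (lower_frac r -> 0 <= r - t <= 2^-1).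

Lemma half_dir_box r t : 0 <= r <= 1 -> stays_on_side t r -> 0 <= r + t * half_dir r <= 1.
Proof.
move=> r01 [up lo]; case: (half_dirP r01) => [/up|/lo|_]; rewrite ?mulr1 ?mulrN1 ?mulr0 ?addr0 //.
- by case/andP=> ? ?; apply/andP; split; lra.
- by case/andP=> ? ?; apply/andP; split; lra.
Qed.

(* An edge across 1/2 keeps its sum; any other covered edge with a moving endpoint
   keeps both endpoints at least 1/2, or has its fixed endpoint at 1. *)
Lemma half_dir_cover xu xv t : 0 <= xu <= 1 -> 0 <= xv <= 1 -> 1 <= xu + xv ->
  stays_on_side t xu -> stays_on_side t xv ->
  1 <= (xu + t * half_dir xu) + (xv + t * half_dir xv).
Proof.
move=> u01 v01 uv [upu lou] [upv lov].
case: (half_dirP u01) => [/[dup] /upu|/[dup] /lou|/halfintP hu];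
case: (half_dirP v01) => [/[dup] /upv|/[dup] /lov|/halfintP hv];
rewrite /upper_frac /lower_frac;
do ?[case/andP=> ? ?]; lra.
Qed.

Definition room (up : bool) r : R :=
  if up then (if upper_frac r then 1 - r else r)
  else (if upper_frac r then r - 2^-1 else 2^-1 - r).

Lemma room_gt0 up r : 0 <= r <= 1 -> ~~ halfint r -> 0 < room up r.
Proof.
move=> r01 rN; rewrite /room.
case: (boolP (upper_frac r)) => [/andP[? ?]|nup]; first by case: up; lra.
have /andP[? ?] : lower_frac r by case: (half_dirP r01) nup rN => [->|//|->].
by case: up; lra.
Qed.

Lemma upper_frac_halfintN r : upper_frac r -> ~~ halfint r.
Proof. by move=> ur; apply/negP => /halfint_frac; rewrite ur. Qed.

Lemma lower_frac_upperN r : lower_frac r -> ~~ upper_frac r.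
Proof. by rewrite /upper_frac => /andP[? ?]; apply/negP => /andP[]; lra. Qed.

Lemma lower_frac_halfintN r : lower_frac r -> ~~ halfint r.
Proof. by move=> lr; apply/negP => /halfint_frac; rewrite lr andbF. Qed.

Lemma stays_on_side_room up eps r : 0 <= eps -> (~~ halfint r -> eps <= room up r) ->
  stays_on_side (if up then eps else - eps) r.
Proof.
move=> eps0 le_room; split=> [ur|lr]; move: le_room.
- move/(_ (upper_frac_halfintN ur)); rewrite /room ur; move: ur => /andP[? ?].
  by case: up => ?; apply/andP; split; lra.
- move/(_ (lower_frac_halfintN lr)); rewrite /room (negbTE (lower_frac_upperN lr)).
  move: lr => /andP[? ?].
  by case: up => ?; apply/andP; split; lra.
Qed.

Lemma halfint_room_shift up r : 0 <= r <= 1 -> ~~ halfint r ->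
  halfint (r + (if up then room up r else - room up r) * half_dir r).
Proof.
move=> r01 rN; apply/halfintP; rewrite /room.
case: (half_dirP r01) => [ur|lr|hr]; last by rewrite hr in rN.
- by rewrite ur; move: ur => /andP[? ?]; case: up; [right; right | right; left]; lra.
- rewrite (negbTE (lower_frac_upperN lr)); move: lr => /andP[? ?].
  by case: up; [left | right; left]; lra.
Qed.

End HalfShift.

Section HalfIntegralRounding.
Variables (R : realType) (n : nat) (E : rel 'I_n).
Implicit Types (p : vc_node n) (x y : vc_point R n).

Definition half_integral x : Prop := forall i, halfint (x i).

Definition half_shift (t : R) x : vc_point R n := fun i => x i + t * half_dir (x i).

Lemma half_shift_halfint t x i : halfint (x i) -> half_shift t x i = x i.
Proof. by move=> hi; rewrite /half_shift half_dir_halfint // mulr0 addr0. Qed.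

Lemma obj_half_shift t x : obj (half_shift t x) = obj x + t * \sum_i half_dir (x i).
Proof. by rewrite /obj /half_shift big_split /= mulr_sumr. Qed.

Lemma half_shift_feasible p x t : feasible E p x ->
  (forall i, stays_on_side t (x i)) -> feasible E p (half_shift t x).
Proof.
move=> [box [cov pfix]] side; split; [|split].
- by move=> i; apply: half_dir_box.
- by move=> u v /cov uv; exact: half_dir_cover (box u) (box v) uv (side u) (side v).
- move=> jb /[dup] /pfix xj _; rewrite half_shift_halfint xj //.
  by case: jb.2; apply/halfintP; [right; right | left].
Qed.

(* Shift the coordinates above and below 1/2 in opposite directions, the way that
   does not increase the objective, until one of them reaches 0, 1/2 or 1. *)
Lemma half_round_step p x i0 : feasible E p x -> ~~ halfint (x i0) ->
  exists2 x', feasible E p x' &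
    [/\ obj x' <= obj x, forall i, halfint (x i) -> x' i = x i &
        (#|[pred i | ~~ halfint (x' i)]| < #|[pred i | ~~ halfint (x i)]|)%N].
Proof.
move=> fx bad0; have [box _] := fx.
set up := \sum_i half_dir (x i) <= 0.
case: (@arg_minP _ R _ i0 (fun i => ~~ halfint (x i)) (fun i => room up (x i)) bad0)
  => i1 bad1 min_room.
have eps0 : 0 < room up (x i1) by apply: room_gt0.
exists (half_shift (if up then room up (x i1) else - room up (x i1)) x).
  by apply: half_shift_feasible => // i; apply: stays_on_side_room (ltW eps0) _; apply: min_room.
split; first 1 last.
- exact: half_shift_halfint.
- rewrite [X in (_ < X)%N](cardD1 i1) inE bad1 add1n ltnS.
  apply/subset_leq_card/fintype.subsetP => i; rewrite !inE => bad'.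
  have -> : ~~ halfint (x i) by apply/contraNN: bad' => hi; rewrite half_shift_halfint.
  rewrite andbT; apply: contraNneq bad' => ->; exact: halfint_room_shift.
- rewrite obj_half_shift gerDl; case: ifP => [sum_le0|/negbT sum_gt0].
  + exact: mulr_ge0_le0 (ltW eps0) sum_le0.
  + by rewrite mulNr oppr_le0 mulr_ge0 ?(ltW eps0) // ltW // ltNge.
Qed.

Lemma half_round p x : feasible E p x ->
  exists2 h, feasible E p h &
    [/\ half_integral h, obj h <= obj x & forall i, halfint (x i) -> h i = x i].
Proof.
have [k] := ubnP #|[pred i | ~~ halfint (x i)]|; elim: k x => // k IH x bad_lt fx.
case: (pickP [pred i | ~~ halfint (x i)]) => [i0 bad0|no_bad]; last first.
  by exists x => //; split=> // i; move: (no_bad i) => /negbFE.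
have [x' fx' [le_x' keep lt_bad]] := half_round_step fx bad0.
have [h fh [hh le_h keep_h]] := IH x' (leq_trans lt_bad (ltnSE bad_lt)) fx'.
exists h => //; split=> //; first exact: le_trans le_x'.
by move=> i hi; rewrite keep_h keep.
Qed.

Lemma exists_argmin (T : finType) (P : T -> Prop) (F : T -> R) :
  (exists t, P t) -> exists t, P t /\ forall u, P u -> F t <= F u.
Proof.
case=> t0 Pt0; have Pb : `[< P t0 >] by apply/asboolP.
case: (@arg_minP _ R _ t0 (fun t => `[< P t >]) F Pb) => t /asboolP Pt t_min.
by exists t; split=> // u Pu; apply/t_min/asboolP.
Qed.

Definition halfpt (f : {ffun 'I_n -> 'I_3}) : vc_point R n := fun i => (f i)%:R / 2.

Lemma halfpt_half_integral f : half_integral (halfpt f).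
Proof.
move=> i; apply/halfintP; rewrite /halfpt; case: (f i) => -[|[|[|m]]] //= _;
  [left | right; left | right; right]; lra.
Qed.

Lemma half_integral_halfpt x : half_integral x -> exists f, x = halfpt f.
Proof.
move=> hx; exists [ffun i => inord (if x i == 0 then 0 else if x i == 1 then 2 else 1)].
apply: funext => i; rewrite /halfpt ffunE.
case/halfintP: (hx i) => [|[]]->.
- by rewrite eqxx inordK // mul0r.
- have [/negbTE-> /negbTE->] : (2^-1 : R) != 0 /\ (2^-1 : R) != 1.
    by split; apply/negP => /eqP; lra.
  by rewrite inordK // mul1r.
- by rewrite oner_eq0 eqxx inordK //; lra.
Qed.

Lemma lp_opt_half_integral p x : feasible E p x -> exists2 y, lp_opt E p y & half_integral y.
Proof.
move=> /half_round[h fh [hh _ _]].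
have some_f : exists f, feasible E p (halfpt f).
  by have [f0 h_f0] := half_integral_halfpt hh; exists f0; rewrite -h_f0.
have [f [ff f_min]] := exists_argmin (fun f => obj (halfpt f)) some_f.
exists (halfpt f); last exact: halfpt_half_integral.
split=> // y /half_round[h' fh' [hh' le_h' _]]; apply: le_trans le_h'.
by have [f' h_f'] := half_integral_halfpt hh'; rewrite h_f'; apply: f_min; rewrite -h_f'.
Qed.

Lemma integral_half_integral x : integral x -> half_integral x.
Proof. by move=> ix i; apply/halfintP; case: (ix i) => ->; [left | right; right]. Qed.

Lemma OPT_attained : exists2 xs, integral xs & feasible E [::] xs /\ OPT R E = (obj xs)%:E.
Proof.
pose P f := feasible E [::] (halfpt f) /\ integral (halfpt f).
have all_ones : P [ffun=> inord 2].
  rewrite /P (_ : halfpt _ = fun=> 1); last first.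
    by apply: funext => i; rewrite /halfpt ffunE inordK //; lra.
  split; [split; [|split] | by right] => //.
  - by move=> i; apply/andP; split; lra.
  - by move=> u v _; lra.
have [f [[ff intf] f_min]] := exists_argmin (fun f => obj (halfpt f)) (ex_intro _ _ all_ones).
exists (halfpt f) => //; split=> //.
apply/le_anti; rewrite (OPT_le_obj intf ff) /=; apply/ereal_infP => _ [y [fy iy] <-].
have [g yg] := half_integral_halfpt (integral_half_integral iy).
by rewrite lee_fin yg; apply: f_min; rewrite /P -yg.
Qed.

End HalfIntegralRounding.

Section Patching.
Variables (R : realType) (n : nat) (E : rel 'I_n).
Implicit Types (p : vc_node n) (x y : vc_point R n).

Definition is01 (r : R) : bool := (r == 0) || (r == 1).

Variant is01_spec (r : R) : bool -> Prop :=
| Is01 of r = 0 \/ r = 1 : is01_spec r true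
| IsFrac of 0 < r < 1 : is01_spec r false.

Lemma is01P (r : R) : 0 <= r <= 1 -> is01_spec r (is01 r).
Proof.
move=> /andP[r0 r1]; rewrite /is01; case: eqP => [->|/eqP r_ne0]; first by apply: Is01; left.
case: eqP => [->|/eqP r_ne1]; first by apply: Is01; right.
by apply: IsFrac; rewrite !lt_def r_ne0 r0 eq_sym r_ne1.
Qed.

Definition patch x y : vc_point R n := fun i => if is01 (x i) then x i else y i.
Definition midpt x y : vc_point R n := fun i => if x i == y i then x i else 2^-1.

Lemma patch_feasible p x y : feasible E p x -> feasible E p y -> feasible E p (patch x y).
Proof.
move=> [boxx [covx fixx]] [boxy [covy fixy]]; split; [|split].
- by move=> i; rewrite /patch; case: ifP.
- move=> u v uv; move: (covx _ _ uv) (covy _ _ uv) (boxy u) (boxy v) => ? ? /andP[? ?] /andP[? ?].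
  rewrite /patch; case: (is01P (boxx u)) => [?|/andP[? ?]];
    case: (is01P (boxx v)) => [?|/andP[? ?]]; lra.
- by move=> jb /fixx; rewrite /patch => ->; case: jb.2; rewrite /is01 eqxx ?orbT.
Qed.

Lemma midpt_feasible p x y : half_integral x -> half_integral y ->
  feasible E p x -> feasible E p y -> feasible E p (midpt x y).
Proof.
move=> hx hy [boxx [covx fixx]] [boxy [covy fixy]]; split; [|split].
- by move=> i; rewrite /midpt; case: ifP => // _; apply/andP; split; lra.
- move=> u v uv; move: (covx _ _ uv) (covy _ _ uv).
  move: (hx u) (hx v) (hy u) (hy v) => /halfintP ? /halfintP ? /halfintP ? /halfintP ?.
  by rewrite /midpt; do 2!case: eqP => ?; lra.
- by move=> jb jbp; rewrite /midpt fixx // fixy // eqxx.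
Qed.

Lemma half_integral_patch x y : half_integral x -> half_integral y -> half_integral (patch x y).
Proof. by move=> hx hy i; rewrite /patch; case: ifP. Qed.

Lemma obj_patch_midpt x y : half_integral x -> half_integral y ->
  obj (patch x y) + obj (patch y x) + 2 * obj (midpt x y) = 2 * obj x + 2 * obj y.
Proof.
move=> hx hy; rewrite /obj !mulr_sumr -!big_split; apply: eq_bigr => i _ /=.
move: (hx i) (hy i) => /halfintP ? /halfintP ?.
by rewrite /patch /midpt /is01; do ![case: eqP => ? /=]; lra.
Qed.

(* [patch x y], [patch y x] and two copies of [midpt x y] are feasible and sum to
   [2 x + 2 y], so none of them can exceed the optimum. *)
Lemma patch_lp_opt p x y : half_integral x -> half_integral y ->
  lp_opt E p x -> lp_opt E p y -> lp_opt E p (patch x y).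
Proof.
move=> hx hy [fx x_min] [fy y_min]; split; first exact: patch_feasible.
move=> z fz; have := obj_patch_midpt hx hy.
have := x_min _ fz; have := x_min _ fy; have := y_min _ fx.
have := x_min _ (patch_feasible fy fx); have := x_min _ (midpt_feasible hx hy fx fy).
lra.
Qed.

Lemma integral_lp_opt_of_coordinatewise p x0 : half_integral x0 -> lp_opt E p x0 ->
  (forall i, exists2 y : vc_point R n, lp_opt E p y & half_integral y /\ is01 (y i)) ->
  exists2 u : vc_point R n, integral u & lp_opt E p u.
Proof.
move=> hx0 ox0 opt_i.
have patched : forall s : seq 'I_n,
    exists2 u : vc_point R n, lp_opt E p u & half_integral u /\ {in s, forall i, is01 (u i)}.
  elim=> [|i s [u ou [hu su]]]; first by exists x0.
  have [y oy [hy yi]] := opt_i i.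
  exists (patch u y); first exact: patch_lp_opt.
  split; first exact: half_integral_patch.
  move=> k; rewrite inE /patch /= => /predU1P[->|/su uk]; last by rewrite uk.
  by case: (boolP (is01 (u i))).
have [u ou [_ su]] := patched (enum 'I_n).
by exists u => // i; case/orP: (su i (mem_enum _ i)) => /eqP; [left|right].
Qed.

End Patching.

Section StrongBranching.
Variables (R : realType) (n : nat) (E : rel 'I_n).
Implicit Types (p : vc_node n) (x y : vc_point R n).
Local Notation lpval := (lpval R E).
Local Notation score := (score R E).

Lemma child_lp_opt p k (b : bool) (z : R) : lpval p = z%:E -> lpval ((k, b) :: p) = z%:E ->
  exists2 y : vc_point R n, lp_opt E p y & half_integral y /\ y k = (if b then 1 else 0).
Proof.
move=> pz cz; have [y0 /lp_opt_half_integral[y [fy y_min] hy]] := lpval_feasible cz.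
have yz : (obj y)%:E = z%:E by rewrite -cz (lpval_lp_opt (conj fy y_min)).
exists y; last by split=> //; case: fy => _ [_ /(_ (k, b) (mem_head _ _))].
split=> [|y' fy']; first exact: feasible_behead fy.
by rewrite -lee_fin yz -pz lpval_le_obj.
Qed.

Lemma sube_EFin_eq0 (a : \bar R) (z : R) : (a - z%:E == 0)%E = (a == z%:E).
Proof. by case: a => [r||] //=; rewrite -EFinB !eqe subr_eq0. Qed.

Lemma score_ge0 p k (z : R) : lpval p = z%:E -> (0 <= score p k)%E.
Proof. by move=> pz; rewrite /score pz mule_ge0 // suber_ge0 // -pz lpval_cons. Qed.

Lemma score_eq0 p k (z : R) : lpval p = z%:E ->
  (score p k == 0)%E = (lpval ((k, true) :: p) == z%:E) || (lpval ((k, false) :: p) == z%:E).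
Proof. by move=> pz; rewrite /score pz mule_eq0 !sube_EFin_eq0. Qed.

(* If the best product score is 0, every fractional coordinate has a child whose
   LP value does not increase, i.e. an optimal solution in which it is 0 or 1. *)
Lemma sb_choice_integral_lp_opt p x k : lp_opt E p x -> sb_choice E p x k ->
  (score p k <= 0)%E -> exists2 u : vc_point R n, integral u & lp_opt E p u.
Proof.
move=> ox [_ k_max] sk; have px := lpval_lp_opt ox.
have [x0 fx0 [hx0 le_x0 keep]] := half_round ox.1.
have ox0 : lp_opt E p x0 by split=> // y fy; exact: le_trans le_x0 (ox.2 _ fy).
apply: (integral_lp_opt_of_coordinatewise hx0 ox0) => i.
case: (is01P (ox.1.1 i)) => [xi01 | xi_frac].
  have hxi : halfint (x i) by apply/halfintP; case: xi01 => ->; [left | right; right].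
  by exists x0 => //; split=> //; rewrite keep //; case: xi01 => ->; rewrite /is01 eqxx ?orbT.
have /eqP : score p i = 0%E.
  by apply/le_anti; rewrite (le_trans (k_max _ xi_frac) sk) (score_ge0 _ px).
rewrite (score_eq0 _ px) => /orP[] /eqP /(child_lp_opt px)[y oy [hy yi]];
  by exists y => //; rewrite /is01 yi eqxx ?orbT.
Qed.

Lemma in_I_integral_lp_opt p x j : lp_opt E p x -> sb_choice E p x j -> in_I R E p j ->
  exists2 u : vc_point R n, integral u & lp_opt E p u.
Proof.
move=> ox sbj [y [oy yj]]; apply: (sb_choice_integral_lp_opt ox sbj).
have child b : y j = (if b then 1 else 0) -> lpval ((j, b) :: p) = (obj y)%:E.
  move=> yjb; have fy := feasible_cons oy.1 yjb.
  by apply/le_anti; rewrite lpval_le_obj //= -(lpval_lp_opt oy) lpval_cons.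
suff /eqP-> : (score p j == 0)%E by [].
rewrite (score_eq0 _ (lpval_lp_opt oy)).
by case: yj => [/(child false)|/(child true)] ->; rewrite eqxx ?orbT.
Qed.

End StrongBranching.

Section BranchAndBound.
Variables (R : realType) (n : nat) (E : rel 'I_n).
Implicit Types (p q g : vc_node n) (x u : vc_point R n) (S T : bb_state R n).
Local Notation lpval := (lpval R E).
Local Notation OPT := (OPT R E).
Local Notation score := (score R E).
Local Notation bb_step := (bb_step E).
Local Notation bb_reach := (bb_reach E).

Lemma bb_reach_ind (P : bb_state R n -> Prop) S S' :
  (forall T T', bb_step T T' -> P T -> P T') -> bb_reach S S' -> P S -> P S'.
Proof. by move=> Pstep; elim=> // T1 T2 T3 st _ IH /(Pstep _ _ st). Qed.

Lemma dual_bound_selectable S p : selectable E S p -> dual_bound E S = lpval p.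
Proof.
case=> pS p_min; rewrite /dual_bound big_seq; apply/le_anti.
rewrite (ge_bigmin_seq _ _ _ _ pS pS) /=.
by apply: le_bigmin => [|q qS]; [rewrite leey | exact: (p_min q qS).1].
Qed.

Lemma bb_step_open S S' q : bb_step S S' -> q \in bb_open S' ->
  q \in bb_open S \/
  exists p x k b, [/\ p \in bb_open S, lp_opt E p x, fractional x k & q = (k, b) :: p].
Proof.
case=> [T p _ _ | T p x _ _ _ | T p x _ _ _ _ | T p x k T' [[pT _] [ox [_ [_ [[xk _] ->]]]]]] /=;
  try by move/mem_rem; left.
rewrite !inE => /predU1P[->|/predU1P[->|/mem_rem]]; last by left.
- by right; exists p, x, k, false.
- by right; exists p, x, k, true.
Qed.

Definition fixings_uniq S : Prop := forall q, q \in bb_open S -> uniq (map fst q).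

Lemma fixings_uniq_step S S' : bb_step S S' -> fixings_uniq S -> fixings_uniq S'.
Proof.
move=> st S_uniq q /(bb_step_open st)[/S_uniq //|[p [x [k [b [pS ox xk ->]]]]]].
by rewrite /= (fractional_notin_fixings ox.1 xk) S_uniq.
Qed.

Lemma OPT_le_inc_step S S' : bb_step S S' -> (OPT <= bb_inc S)%E -> (OPT <= bb_inc S')%E.
Proof.
case=> //= [T p x _ ox ix | T p x k T' [_ [_ [_ [_ [_ ->]]]]]] //=.
by rewrite le_min => ->; exact: OPT_le_obj ix ox.1.
Qed.

Lemma inc_OPT_step S S' : bb_step S S' -> bb_inc S = OPT -> bb_inc S' = OPT.
Proof.
case=> //= [T p x _ ox ix | T p x k T' [_ [_ [_ [_ [_ ->]]]]]] //= ->.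
by apply/min_idPl; exact: OPT_le_obj ix ox.1.
Qed.

Definition contains_opt q : Prop :=
  exists2 u : vc_point R n, integral u & feasible E q u /\ (obj u)%:E = OPT.

Lemma contains_opt_lpval q : contains_opt q -> (lpval q <= OPT)%E.
Proof. by case=> u _ [fu <-]; exact: lpval_le_obj. Qed.

Lemma contains_opt_child q k : contains_opt q -> exists b, contains_opt ((k, b) :: q).
Proof.
case=> u iu [fu uOPT]; exists (u k == 1); exists u => //; split=> //.
by apply: feasible_cons fu _; case: (iu k) => ->; rewrite ?eqxx // eq_sym oner_eq0.
Qed.

Definition opt_found_or_open S : Prop :=
  bb_inc S = OPT \/ exists2 g, g \in bb_open S & contains_opt g.

Lemma opt_found_or_open_step S S' : bb_step S S' -> (OPT <= bb_inc S)%E ->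
  opt_found_or_open S -> opt_found_or_open S'.
Proof.
move=> st OPT_inc [found|[g gS g_opt]]; first by left; exact: inc_OPT_step st found.
case: st OPT_inc gS => [T p _ p_inf | T p x _ ox ix | T p x _ _ _ inc_lt |
  T p x k T' [_ [_ [_ [_ [_ ->]]]]]] /= OPT_inc gS;
  (have [gp_eq|gp] := eqVneq g p;
    [subst g | by right; exists g; rewrite // ?inE (rem_mem gp gS) ?orbT]).
- by move: (contains_opt_lpval g_opt); rewrite p_inf leye_eq => /eqP; case: g_opt => u _ [_ <-].
- have xOPT : (obj x)%:E = OPT.
    apply/le_anti; rewrite (OPT_le_obj ix ox.1) andbT.
    by case: g_opt => u iu [fu <-]; rewrite lee_fin (ox.2 _ fu).
  by left; rewrite xOPT; apply/min_idPr.
- by move: (lt_le_trans inc_lt (contains_opt_lpval g_opt)); rewrite ltNge OPT_inc.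
- have [b cb] := contains_opt_child k g_opt; right; exists ((k, b) :: p) => //.
  by case: b {cb}; rewrite !inE eqxx ?orbT.
Qed.

Definition bb_inv S : Prop :=
  [/\ (OPT <= bb_inc S)%E, fixings_uniq S & opt_found_or_open S].

Lemma bb_inv_step S S' : bb_step S S' -> bb_inv S -> bb_inv S'.
Proof.
move=> st [OPT_inc S_uniq S_opt]; split; first exact: OPT_le_inc_step st OPT_inc.
  exact: fixings_uniq_step st S_uniq.
exact: opt_found_or_open_step st OPT_inc S_opt.
Qed.

Lemma bb_inv_reach S : bb_reach (bb_init R n) S -> bb_inv S.
Proof.
move/(bb_reach_ind bb_inv_step); apply.
split=> //=; [by rewrite leey | by move=> q; rewrite inE => /eqP-> |].
have [xs ixs [fxs xsOPT]] := @OPT_attained R n E; right; exists [::]; first exact: mem_head.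
by exists xs.
Qed.

Lemma lpval_branch_in_I S N x j S' : bb_inv S -> branch_at E S N x j S' -> in_I R E N j ->
  lpval N = OPT.
Proof.
move=> [_ _ S_opt] [[_ N_min] [oN [_ [N_inc [sbj _]]]]] inI.
have [u iu ou] := in_I_integral_lp_opt oN sbj inI.
apply/le_anti; rewrite (lpval_lp_opt ou) (OPT_le_obj iu ou.1) andbT -(lpval_lp_opt ou).
case: S_opt => [<- //|[g gS g_opt]].
exact: le_trans (N_min g gS).1 (contains_opt_lpval g_opt).
Qed.

Definition open_ge_OPT T : Prop := forall q, q \in bb_open T -> (OPT <= lpval q)%E.

Lemma open_ge_OPT_step T T' : bb_step T T' -> open_ge_OPT T -> open_ge_OPT T'.
Proof.
move=> st geT q /(bb_step_open st)[/geT //|[p [x [k [b [pT _ _ ->]]]]]].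
by apply: le_trans (geT p pT) _; apply: lpval_cons.
Qed.

Lemma selectable_contains_opt T p g : open_ge_OPT T -> selectable E T p ->
  g \in bb_open T -> contains_opt g -> lpval p = OPT /\ (size g <= size p)%N.
Proof.
move=> geT [pT p_min] gT g_opt.
have gOPT : lpval g = OPT by apply/le_anti; rewrite contains_opt_lpval // geT.
have pOPT : lpval p = OPT by apply/le_anti; rewrite geT // andbT -gOPT (p_min g gT).1.
by split=> //; apply: (p_min g gT).2; rewrite gOPT pOPT.
Qed.

Definition deep d q : bool := (lpval q == OPT) && (d < size q)%N.

(* A potential: every branching either extends the tracked node [g] by one fixing
   or discards one of the finitely many deep open nodes. *)
Definition dive_potential d nbr0 T g : Prop :=
  (bb_nbr T + count (deep d) (bb_open T) + 2 * d.+1 <= nbr0 + 2 + 2 * size g)%N.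

Definition dive_inv d nbr0 T : Prop :=
  bb_inc T = OPT \/
  exists g, [/\ g \in bb_open T, contains_opt g, (d < size g)%N & dive_potential d nbr0 T g].

Lemma dive_inv_branch d nbr0 T p x k T' g : open_ge_OPT T -> branch_at E T p x k T' ->
  g \in bb_open T -> contains_opt g -> (d < size g)%N -> dive_potential d nbr0 T g ->
  dive_inv d nbr0 T'.
Proof.
move=> geT [sel [ox [_ [_ [sbk ->]]]]] gT g_opt dg; rewrite /dive_potential /=.
have [pOPT gp] := selectable_contains_opt geT sel gT g_opt.
have deep_p : deep d p by rewrite /deep pOPT eqxx (leq_trans dg gp).
rewrite (permP (perm_to_rem sel.1)) /= deep_p => pot; right.
have [p_opt|p_nopt] := pselect (contains_opt p).
  have [b cb] := contains_opt_child k p_opt; exists ((k, b) :: p); split=> //=.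
  - by case: b {cb}; rewrite !inE eqxx ?orbT.
  - by rewrite ltnS (leq_trans (ltnW dg) gp).
  - rewrite /dive_potential /=; move: (deep d ((k, false) :: p)) (deep d ((k, true) :: p)).
    by move: pot gp; set c := count _ _ => pot gp [] [] /=; lia.
have shallow b : deep d ((k, b) :: p) = false.
  apply/negbTE/negP => /andP[/eqP cOPT _]; apply: p_nopt.
  have px := lpval_lp_opt ox.
  have /eqP s0 : (score p k == 0)%E.
    by rewrite (score_eq0 _ px) -px pOPT; case: b cOPT => ->; rewrite eqxx ?orbT.
  have sk : (score p k <= 0)%E by rewrite s0.
  have [u iu ou] := sb_choice_integral_lp_opt ox sbk sk.
  by exists u => //; split; [exact: ou.1 | rewrite -pOPT (lpval_lp_opt ou)].
exists g; split=> //=; last first.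
  by rewrite /dive_potential /= !shallow; move: pot; set c := count _ _; lia.
have gp' : g != p by apply/eqP => gp_eq; apply: p_nopt; rewrite -gp_eq.
by rewrite !inE (rem_mem gp' gT) !orbT.
Qed.

Lemma dive_inv_step d nbr0 T T' : bb_step T T' -> (OPT <= bb_inc T)%E ->
  open_ge_OPT T -> dive_inv d nbr0 T -> dive_inv d nbr0 T'.
Proof.
move=> st OPT_inc geT [found|[g [gT g_opt dg pot]]]; first by left; exact: inc_OPT_step st found.
case: st OPT_inc geT gT pot => [T0 p sel p_inf | T0 p x sel ox _ | T0 p x sel _ _ inc_lt |
  T0 p x k T1 br] OPT_inc geT gT pot; last exact: dive_inv_branch geT br gT g_opt dg pot.
all: have [pOPT _] := selectable_contains_opt geT sel gT g_opt.
- by case: g_opt => u _ [_ uOPT]; move: pOPT; rewrite p_inf -uOPT.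
- by left; rewrite /= -pOPT (lpval_lp_opt ox); apply/min_idPr; rewrite -(lpval_lp_opt ox) pOPT.
- by move: inc_lt; rewrite pOPT ltNge OPT_inc.
Qed.

Lemma dive_inv_done d nbr0 T : fixings_uniq T -> dive_inv d nbr0 T ->
  (2 * n.+1 < bb_nbr T - nbr0)%N \/ bb_open T = [::] -> bb_inc T = OPT.
Proof.
move=> T_uniq [//|[g [gT _ dg pot]]] [many|empty]; last by rewrite empty in gT.
have : (size g <= n)%N.
  by rewrite -(size_map fst) -(card_uniqP (T_uniq g gT)) -[n in (_ <= n)%N]card_ord max_card.
by move: pot; rewrite /dive_potential; set c := count _ _; lia.
Qed.

Definition dive_state d nbr0 T : Prop :=
  [/\ bb_inv T, open_ge_OPT T & dive_inv d nbr0 T].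

Lemma dive_state_step d nbr0 T T' : bb_step T T' -> dive_state d nbr0 T -> dive_state d nbr0 T'.
Proof.
move=> st [invT geT diveT]; split; [exact: bb_inv_step st invT | exact: open_ge_OPT_step st geT |].
by case: invT => OPT_inc _ _; exact: dive_inv_step st OPT_inc geT diveT.
Qed.

(* The tie-break by depth makes every other open node of LP value OPT shallower
   than [N], so only the children of [N] count as deep. *)
Lemma dive_state_branch S N x j S' : bb_inv S -> branch_at E S N x j S' -> in_I R E N j ->
  dive_state (size N) (bb_nbr S') S'.
Proof.
move=> invS br inI; have NOPT := lpval_branch_in_I invS br inI.
have [[_ N_min] [oN [_ [_ [sbj S'E]]]]] := br.
split; first exact: bb_inv_step (step_branch br) invS.
  rewrite S'E => q; rewrite !inE -NOPT => /predU1P[->|/predU1P[->|/mem_rem qS]];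
    [exact: lpval_cons | exact: lpval_cons | exact: (N_min q qS).1].
have [u iu ou] := in_I_integral_lp_opt oN sbj inI.
have N_opt : contains_opt N.
  by exists u => //; split; [exact: ou.1 | rewrite -NOPT (lpval_lp_opt ou)].
have [b cb] := contains_opt_child j N_opt; right; exists ((j, b) :: N); rewrite S'E.
split=> //=; first by case: b {cb}; rewrite !inE eqxx ?orbT.
rewrite /dive_potential /=.
have -> : count (deep (size N)) (rem N (bb_open S)) = 0%N.
  apply/eqP; rewrite -leqn0 leqNgt -has_count; apply/hasPn => q /mem_rem qS.
  rewrite /deep -NOPT; apply/negP => /andP[/eqP qN]; rewrite ltnNge (N_min q qS).2 //.
by move: (deep _ ((j, false) :: N)) (deep _ ((j, true) :: N)) => [] [] /=; lia.
Qed.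

End BranchAndBound.

Theorem proposition2p2 :
  exists C : nat,
  forall (R : realType) (n : nat) (E : rel 'I_n),
    symmetric E -> irreflexive E ->
    forall (S S' : bb_state R n) (N : vc_node n) (x : vc_point R n) (j : 'I_n),
      bb_reach E (bb_init R n) S ->
      branch_at E S N x j S' ->
      in_I R E N j ->
      dual_bound E S = OPT R E /\
      (forall S'' : bb_state R n, bb_reach E S' S'' ->
         (C * n.+1 < bb_nbr S'' - bb_nbr S')%N \/ bb_open S'' = [::] ->
         bb_inc S'' = OPT R E).
Proof.
exists 2%N => R n E _ _ S S' N x j reachS br inI.
have invS := bb_inv_reach reachS.
split; first by rewrite (dual_bound_selectable br.1) (lpval_branch_in_I invS br inI).
move=> S'' reachS'' finished.
have [[_ S''_uniq _] _ diveS''] :=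
  bb_reach_ind (@dive_state_step _ _ _ _ _) reachS'' (dive_state_branch invS br inI).
exact: dive_inv_done S''_uniq diveS'' finished.
Qed.
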